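(* Let $R\subseteq\{e,c,w\}$ and let $\{s_1,\ldots,s_n\}\cup\{x\Rightarrow\delta\}$ ($n\ge1$) be a finite set of $\mathcal L^0$-sequents (sequents not containing $!$). Then $\{s_1,\ldots,s_n\}\vdash_{\mathbf{InFNL}_R}x\Rightarrow\delta\iff\ \vdash_{\mathbf{NACCLL}^-_R}x\circ(\tau(s_1)\circ(\tau(s_2)\circ\cdots(\tau(s_{n-1})\circ\tau(s_n))\cdots))\Rightarrow\delta$, and $\{s_1,\ldots,s_n\}\vdash_{\mathbf{CyInFNL}_R}x\Rightarrow\delta\iff\ \vdash_{\mathbf{NACCLL}_R}x\circ(\tau(s_1)\circ(\tau(s_2)\circ\cdots(\tau(s_{n-1})\circ\tau(s_n))\cdots))\Rightarrow\delta$.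
   Context: Formulas: terms over a countably infinite set of variables in $\{\wedge,\vee,\cdot,\backslash,/,!,1,0\}$; $\mathcal L^0$-formulas are those without $!$. Structures: elements of the free unital groupoid $(Fm^\circ,\circ,\varepsilon)$ generated by formulas ($\circ$ non-associative, $\varepsilon$ empty structure and unit). $k$ ranges over structures in the free unital groupoid generated by formulas $!a$ (including $\varepsilon$). A context $u$ is a structure with exactly one hole; $u(x)$ fills it. A sequent is $x\Rightarrow\delta$, $\delta$ a formula or the empty stoup $\epsilon$. For a structure $x$, $\rho(x)$ is the formula obtained by replacing each $\circ$ by $\cdot$ ($\rho(\varepsilon)=1$); $\theta(\epsilon)=0$, $\theta(a)=a$; for $s=(x\Rightarrow\delta)$, $\tau(s)=!(\rho(x)\backslash\theta(\delta))$. $\mathbf{NACILL}^0$: initial sequents $a\Rightarrow a$, $\varepsilon\Rightarrow 1$, $0\Rightarrow\epsilon$; rules (premises / conclusion): (cut) $x\Rightarrow a$, $u(a)\Rightarrow\delta$ / $u(x)\Rightarrow\delta$; $(1\Rightarrow)$ $u(\varepsilon)\Rightarrow\delta$ / $u(1)\Rightarrow\delta$; $(\Rightarrow 0)$ $x\Rightarrow\epsilon$ / $x\Rightarrow 0$; $(\backslash\Rightarrow)$ $x\Rightarrow a$, $u(b)\Rightarrow\delta$ / $u(x\circ(a\backslash b))\Rightarrow\delta$; $(\Rightarrow\backslash)$ $a\circ x\Rightarrow b$ / $x\Rightarrow a\backslash b$; $(/\Rightarrow)$ $x\Rightarrow a$, $u(b)\Rightarrow\delta$ / $u((b/a)\circ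 x)\Rightarrow\delta$; $(\Rightarrow/)$ $x\circ a\Rightarrow b$ / $x\Rightarrow b/a$; $(\cdot\Rightarrow)$ $u(a\circ b)\Rightarrow\delta$ / $u(a\cdot b)\Rightarrow\delta$; $(\Rightarrow\cdot)$ $x\Rightarrow a$, $y\Rightarrow b$ / $x\circ y\Rightarrow a\cdot b$; $(\wedge\Rightarrow)$ $u(a_i)\Rightarrow\delta$ / $u(a_1\wedge a_2)\Rightarrow\delta$; $(\Rightarrow\wedge)$ $x\Rightarrow a$, $x\Rightarrow b$ / $x\Rightarrow a\wedge b$; $(\vee\Rightarrow)$ $u(a)\Rightarrow\delta$, $u(b)\Rightarrow\delta$ / $u(a\vee b)\Rightarrow\delta$; $(\Rightarrow\vee)$ $x\Rightarrow a_i$ / $x\Rightarrow a_1\vee a_2$; $(!\Rightarrow)$ $u(a)\Rightarrow\delta$ / $u(!a)\Rightarrow\delta$; $(\Rightarrow!)$ $k\Rightarrow a$ / $k\Rightarrow !a$; $(kw)$ $u(\varepsilon)\Rightarrow\delta$ / $u(k)\Rightarrow\delta$; $(kc)$ $u(k\circ k)\Rightarrow\delta$ / $u(k)\Rightarrow\delta$; two-directional: $(ke)$ $u(k\circ y)\Rightarrow\delta\leftrightarrow u(y\circ k)\Rightarrow\delta$; $(ka1)$ $u((k\circ y)\circ z)\Rightarrow\delta\leftrightarrow u(k\circ(y\circ z))\Rightarrow\delta$; $(ka2)$ $u((x\circ y)\circ k)\Rightarrow\delta\leftrightarrow u(x\circ(y\circ k))\Rightarrow\delta$. $\mathbf{NACCLL}^-$: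 $\mathbf{NACILL}^0$ plus initial sequents ${\sim}(-a)\Rightarrow a$, $-({\sim}a)\Rightarrow a$, $({\sim}a)/b\Rightarrow a\backslash(-b)$, $a\backslash(-b)\Rightarrow({\sim}a)/b$, where ${\sim}a:=a\backslash 0$, $-a:=0/a$. $\mathbf{NACCLL}$: additionally ${\sim}a\Rightarrow -a$, $-a\Rightarrow{\sim}a$. $\mathbf{InFNL}$ ($\mathbf{CyInFNL}$): the $!$-free fragment of $\mathbf{NACCLL}^-$ ($\mathbf{NACCLL}$), using only $!$-free formulas and omitting $(!\Rightarrow),(\Rightarrow!),(kw),(kc),(ke),(ka1),(ka2)$. Structural rules: $(e)$ $u(x\circ y)\Rightarrow\delta$ / $u(y\circ x)\Rightarrow\delta$; $(c)$ $u(x\circ x)\Rightarrow\delta$ / $u(x)\Rightarrow\delta$; $(i)$ $u(\varepsilon)\Rightarrow\delta$ / $u(x)\Rightarrow\delta$; $(o)$ $x\Rightarrow\epsilon$ / $x\Rightarrow a$; $(w)$ means both $(i)$ and $(o)$. Subscript $R$ adds the rules in $R$. $\mathcal S\vdash s$: there is a derivation of $s$ whose leaves are initial sequents or members of $\mathcal S$; $\vdash s$ means $\emptyset\vdash s$. *)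

From Stdlib Require Import List.
Import ListNotations.

(* Formulas.  LDiv a b is  a\b ;  RDiv b a is  b/a. *)
Inductive form : Type :=
| Var  : nat -> form
| And  : form -> form -> form
| Or   : form -> form -> form
| Mul  : form -> form -> form
| LDiv : form -> form -> form
| RDiv : form -> form -> form
| Bang : form -> form
| One  : form
| Zero : form.

Fixpoint bangfree (a : form) : Prop :=
  match a with
  | Var _ | One | Zero => True
  | And a b | Or a b | Mul a b | LDiv a b | RDiv a b => bangfree a /\ bangfree b
  | Bang _ => False
  end.

(* ~a := a\0 ,  -a := 0/a *)
Definition neg_l (a : form) : form := LDiv a Zero.
Definition neg_r (a : form) : form := RDiv Zero a.

(* Raw structures (terms of the groupoid); they are identified modulo the
   unit laws  eps o x = x = x o eps  via [norm]. *)
Inductive Str : Type :=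
| SF    : form -> Str
| SComp : Str -> Str -> Str
| SEmpty : Str.

Definition comp (x y : Str) : Str :=
  match x, y with
  | SEmpty, _ => y
  | _, SEmpty => x
  | _, _ => SComp x y
  end.

Fixpoint norm (x : Str) : Str :=
  match x with
  | SF a => SF a
  | SComp x y => comp (norm x) (norm y)
  | SEmpty => SEmpty
  end.

Fixpoint bangfree_str (x : Str) : Prop :=
  match x with
  | SF a => bangfree a
  | SComp x y => bangfree_str x /\ bangfree_str y
  | SEmpty => True
  end.

Fixpoint isK (x : Str) : Prop :=
  match x with
  | SF (Bang _) => True
  | SF _ => False
  | SComp x y => isK x /\ isK y
  | SEmpty => True
  end.

Inductive Ctx : Type :=
| Hole : Ctx
| CL : Ctx -> Str -> Ctx
| CR : Str -> Ctx -> Ctx.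

Fixpoint fill (u : Ctx) (z : Str) : Str :=
  match u with
  | Hole => z
  | CL u y => SComp (fill u z) y
  | CR x u => SComp x (fill u z)
  end.

(* stoup: None is the empty stoup epsilon *)
Definition stoup := option form.
Definition sequent : Type := (Str * stoup)%type.

Definition bangfree_stoup (d : stoup) : Prop :=
  match d with None => True | Some a => bangfree a end.

Definition bangfree_seq (s : sequent) : Prop :=
  bangfree_str (fst s) /\ bangfree_stoup (snd s).

Fixpoint rho (x : Str) : form :=
  match x with
  | SF a => a
  | SComp x y => Mul (rho x) (rho y)
  | SEmpty => One
  end.

Definition theta (d : stoup) : form :=
  match d with None => Zero | Some a => a end.

Definition tau (s : sequent) : form := Bang (LDiv (rho (fst s)) (theta (snd s))).

Fixpoint tauchain (l : list sequent) : Str :=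
  match l with
  | [] => SEmpty
  | [s] => SF (tau s)
  | s :: l' => SComp (SF (tau s)) (tauchain l')
  end.

(* Structural rules: e, c, w (w = i and o) *)
Inductive srule : Type := Re | Rc | Rw.

(* Derivability.  [bg] = true: the calculus with ! (NACCLL^-/NACCLL);
   [bg] = false: its !-free fragment (InFNL/CyInFNL): the ! rules are
   omitted and every sequent in the derivation must be !-free.
   [cy] = true adds the cyclic initial sequents ~a => -a, -a => ~a.
   [R] : the structural rules added.  [S] : the non-logical leaves. *)
Definition ok (bg : bool) (x : Str) (d : stoup) : Prop :=
  bg = true \/ (bangfree_str x /\ bangfree_stoup d).

Inductive Deriv (bg cy : bool) (R : srule -> Prop) (S : sequent -> Prop)
  : Str -> stoup -> Prop :=
| d_unit : forall x y d, Deriv bg cy R S x d -> norm x = norm y -> ok bg y d ->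
    Deriv bg cy R S y d
| d_hyp : forall x d, S (x, d) -> ok bg x d -> Deriv bg cy R S x d
| d_id : forall a, ok bg (SF a) (Some a) -> Deriv bg cy R S (SF a) (Some a)
| d_one : Deriv bg cy R S SEmpty (Some One)
| d_zero : Deriv bg cy R S (SF Zero) None
| d_ax1 : forall a, ok bg (SF (neg_l (neg_r a))) (Some a) ->
    Deriv bg cy R S (SF (neg_l (neg_r a))) (Some a)
| d_ax2 : forall a, ok bg (SF (neg_r (neg_l a))) (Some a) ->
    Deriv bg cy R S (SF (neg_r (neg_l a))) (Some a)
| d_ax3 : forall a b, ok bg (SF (RDiv (neg_l a) b)) (Some (LDiv a (neg_r b))) ->
    Deriv bg cy R S (SF (RDiv (neg_l a) b)) (Some (LDiv a (neg_r b)))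
| d_ax4 : forall a b, ok bg (SF (LDiv a (neg_r b))) (Some (RDiv (neg_l a) b)) ->
    Deriv bg cy R S (SF (LDiv a (neg_r b))) (Some (RDiv (neg_l a) b))
| d_cyc1 : forall a, cy = true -> ok bg (SF (neg_l a)) (Some (neg_r a)) ->
    Deriv bg cy R S (SF (neg_l a)) (Some (neg_r a))
| d_cyc2 : forall a, cy = true -> ok bg (SF (neg_r a)) (Some (neg_l a)) ->
    Deriv bg cy R S (SF (neg_r a)) (Some (neg_l a))
| d_cut : forall x a u d,
    Deriv bg cy R S x (Some a) -> Deriv bg cy R S (fill u (SF a)) d ->
    ok bg (fill u x) d -> Deriv bg cy R S (fill u x) d
| d_oneL : forall u d, Deriv bg cy R S (fill u SEmpty) d ->
    ok bg (fill u (SF One)) d -> Deriv bg cy R S (fill u (SF One)) d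
| d_zeroR : forall x, Deriv bg cy R S x None -> Deriv bg cy R S x (Some Zero)
| d_ldivL : forall x a b u d,
    Deriv bg cy R S x (Some a) -> Deriv bg cy R S (fill u (SF b)) d ->
    ok bg (fill u (SComp x (SF (LDiv a b)))) d ->
    Deriv bg cy R S (fill u (SComp x (SF (LDiv a b)))) d
| d_ldivR : forall x a b, Deriv bg cy R S (SComp (SF a) x) (Some b) ->
    ok bg x (Some (LDiv a b)) -> Deriv bg cy R S x (Some (LDiv a b))
| d_rdivL : forall x a b u d,
    Deriv bg cy R S x (Some a) -> Deriv bg cy R S (fill u (SF b)) d ->
    ok bg (fill u (SComp (SF (RDiv b a)) x)) d ->
    Deriv bg cy R S (fill u (SComp (SF (RDiv b a)) x)) d
| d_rdivR : forall x a b, Deriv bg cy R S (SComp x (SF a)) (Some b) ->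
    ok bg x (Some (RDiv b a)) -> Deriv bg cy R S x (Some (RDiv b a))
| d_mulL : forall u a b d, Deriv bg cy R S (fill u (SComp (SF a) (SF b))) d ->
    ok bg (fill u (SF (Mul a b))) d -> Deriv bg cy R S (fill u (SF (Mul a b))) d
| d_mulR : forall x y a b, Deriv bg cy R S x (Some a) -> Deriv bg cy R S y (Some b) ->
    Deriv bg cy R S (SComp x y) (Some (Mul a b))
| d_andL1 : forall u a b d, Deriv bg cy R S (fill u (SF a)) d ->
    ok bg (fill u (SF (And a b))) d -> Deriv bg cy R S (fill u (SF (And a b))) d
| d_andL2 : forall u a b d, Deriv bg cy R S (fill u (SF b)) d ->
    ok bg (fill u (SF (And a b))) d -> Deriv bg cy R S (fill u (SF (And a b))) d
| d_andR : forall x a b, Deriv bg cy R S x (Some a) -> Deriv bg cy R S x (Some b) ->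
    Deriv bg cy R S x (Some (And a b))
| d_orL : forall u a b d, Deriv bg cy R S (fill u (SF a)) d ->
    Deriv bg cy R S (fill u (SF b)) d -> Deriv bg cy R S (fill u (SF (Or a b))) d
| d_orR1 : forall x a b, Deriv bg cy R S x (Some a) ->
    ok bg x (Some (Or a b)) -> Deriv bg cy R S x (Some (Or a b))
| d_orR2 : forall x a b, Deriv bg cy R S x (Some b) ->
    ok bg x (Some (Or a b)) -> Deriv bg cy R S x (Some (Or a b))
| d_bangL : forall u a d, bg = true -> Deriv bg cy R S (fill u (SF a)) d ->
    Deriv bg cy R S (fill u (SF (Bang a))) d
| d_bangR : forall k a, bg = true -> isK k -> Deriv bg cy R S k (Some a) ->
    Deriv bg cy R S k (Some (Bang a))
| d_kw : forall u k d, bg = true -> isK k -> Deriv bg cy R S (fill u SEmpty) d ->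
    Deriv bg cy R S (fill u k) d
| d_kc : forall u k d, bg = true -> isK k -> Deriv bg cy R S (fill u (SComp k k)) d ->
    Deriv bg cy R S (fill u k) d
| d_ke1 : forall u k y d, bg = true -> isK k ->
    Deriv bg cy R S (fill u (SComp k y)) d -> Deriv bg cy R S (fill u (SComp y k)) d
| d_ke2 : forall u k y d, bg = true -> isK k ->
    Deriv bg cy R S (fill u (SComp y k)) d -> Deriv bg cy R S (fill u (SComp k y)) d
| d_ka1a : forall u k y z d, bg = true -> isK k ->
    Deriv bg cy R S (fill u (SComp (SComp k y) z)) d ->
    Deriv bg cy R S (fill u (SComp k (SComp y z))) d
| d_ka1b : forall u k y z d, bg = true -> isK k ->
    Deriv bg cy R S (fill u (SComp k (SComp y z))) d ->
    Deriv bg cy R S (fill u (SComp (SComp k y) z)) d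
| d_ka2a : forall u k x y d, bg = true -> isK k ->
    Deriv bg cy R S (fill u (SComp (SComp x y) k)) d ->
    Deriv bg cy R S (fill u (SComp x (SComp y k))) d
| d_ka2b : forall u k x y d, bg = true -> isK k ->
    Deriv bg cy R S (fill u (SComp x (SComp y k))) d ->
    Deriv bg cy R S (fill u (SComp (SComp x y) k)) d
| d_e : forall u x y d, R Re -> Deriv bg cy R S (fill u (SComp x y)) d ->
    Deriv bg cy R S (fill u (SComp y x)) d
| d_c : forall u x d, R Rc -> Deriv bg cy R S (fill u (SComp x x)) d ->
    Deriv bg cy R S (fill u x) d
| d_i : forall u x d, R Rw -> Deriv bg cy R S (fill u SEmpty) d ->
    ok bg (fill u x) d -> Deriv bg cy R S (fill u x) d
| d_o : forall x a, R Rw -> Deriv bg cy R S x None -> ok bg x (Some a) ->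
    Deriv bg cy R S x (Some a).

Definition InFNL_der (R : srule -> Prop) (S : sequent -> Prop) (x : Str) (d : stoup) :=
  Deriv false false R S x d.
Definition CyInFNL_der (R : srule -> Prop) (S : sequent -> Prop) (x : Str) (d : stoup) :=
  Deriv false true R S x d.
Definition NACCLLm_prov (R : srule -> Prop) (x : Str) (d : stoup) :=
  Deriv true false R (fun _ => False) x d.
Definition NACCLL_prov (R : srule -> Prop) (x : Str) (d : stoup) :=
  Deriv true true R (fun _ => False) x d.

From Stdlib Require Import List ClassicalEpsilon.

(* Forward: every sequent [y => d] of a derivation from s_1, ..., s_n becomes
   [y o K => d], where K = tau(s_1) o (... o tau(s_n)).  K is a k-structure, so it
   can be weakened, contracted, exchanged and reassociated freely, and a hypothesis
   s_i = (y => d) is recovered from [y o !(rho(y) \ theta(d)) => d] by (! =>) and (\ =>).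

   Backward: interpret the calculus with ! in a residuated algebra with an absorbing
   bottom, reading !m as 1 when 1 <= m and as bottom otherwise.  k-structures then
   denote 1 or bottom, which validates the k-rules.  In the Lindenbaum algebra of
   !-free formulas modulo derivability from s_1, ..., s_n (with 0 as bottom under
   weakening, and with a bottom and a top adjoined otherwise) every tau(s_i) denotes
   1, so soundness turns [x o K => d] into rho(x) |- theta(d). *)

Set Implicit Arguments.

Fixpoint ctx_comp (v u : Ctx) : Ctx :=
  match v with
  | Hole => u
  | CL v y => CL (ctx_comp v u) y
  | CR x v => CR x (ctx_comp v u)
  end.

Lemma fill_ctx_comp v u z : fill (ctx_comp v u) z = fill v (fill u z).
Proof. induction v; simpl; congruence. Qed.

Lemma ok_true x d : ok true x d.
Proof. now left. Qed.
#[local] Hint Resolve ok_true : core.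

Lemma isK_tauchain l : isK (tauchain l).
Proof.
  induction l as [|s l IH]; simpl; auto.
  destruct l; simpl; auto.
Qed.

Fixpoint bangfree_ctx (u : Ctx) : Prop :=
  match u with
  | Hole => True
  | CL u y => bangfree_ctx u /\ bangfree_str y
  | CR x u => bangfree_str x /\ bangfree_ctx u
  end.

Lemma bangfree_fill u z : bangfree_str (fill u z) <-> bangfree_ctx u /\ bangfree_str z.
Proof. induction u; simpl; try rewrite IHu; tauto. Qed.

Lemma bangfree_rho y : bangfree_str y -> bangfree (rho y).
Proof. induction y; simpl; tauto. Qed.

Lemma bangfree_theta d : bangfree_stoup d -> bangfree (theta d).
Proof. now destruct d. Qed.

Ltac solve_ok := right; split; simpl; try rewrite bangfree_fill; simpl;
  intuition auto using bangfree_rho, bangfree_theta.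

Section KStructures.
Variables (cy : bool) (R : srule -> Prop) (S : sequent -> Prop).
Local Notation D := (Deriv true cy R S).

Lemma k_exchange_iff u k y d : isK k ->
  D (fill u (SComp k y)) d <-> D (fill u (SComp y k)) d.
Proof. split; [apply d_ke1 | apply d_ke2]; auto. Qed.

Lemma k_assoc_l_iff u k y z d : isK k ->
  D (fill u (SComp (SComp k y) z)) d <-> D (fill u (SComp k (SComp y z))) d.
Proof. split; [apply d_ka1a | apply d_ka1b]; auto. Qed.

Lemma k_assoc_r_iff u k x y d : isK k ->
  D (fill u (SComp (SComp x y) k)) d <-> D (fill u (SComp x (SComp y k))) d.
Proof. split; [apply d_ka2a | apply d_ka2b]; auto. Qed.

Lemma k_float_iff u : forall k v z d, isK k ->
  D (fill v (fill u (SComp z k))) d <-> D (fill v (SComp (fill u z) k)) d.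
Proof.
  induction u as [|u IH y|x u IH]; intros k v z d Hk; simpl; [tauto| |].
  - specialize (IH k (ctx_comp v (CL Hole y)) z d Hk).
    pose proof (k_exchange_iff (ctx_comp v (CL Hole y)) k (fill u z) d Hk) as Hex.
    rewrite !fill_ctx_comp in IH, Hex; simpl in IH, Hex.
    rewrite IH, <- Hex, (k_assoc_l_iff v k (fill u z) y d Hk).
    apply k_exchange_iff; auto.
  - specialize (IH k (ctx_comp v (CR x Hole)) z d Hk).
    rewrite !fill_ctx_comp in IH; simpl in IH.
    rewrite IH; symmetry; apply k_assoc_r_iff; auto.
Qed.

Lemma k_contract x k d : isK k -> D (SComp (SComp x k) k) d -> D (SComp x k) d.
Proof.
  intros Hk H. apply (d_ka2a _ _ _ _ Hole) in H; auto.
  apply (d_kc _ _ _ _ (CR x Hole)); auto.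
Qed.

Lemma k_weaken x k d : isK k -> D x d -> D (SComp x k) d.
Proof.
  intros Hk H. apply (d_kw _ _ _ _ (CR x Hole)); auto.
  apply d_unit with x; auto. simpl. now destruct (norm x).
Qed.

Lemma k_absorb u w z k d : isK k ->
  D (SComp (fill u (fill w (SComp z k))) k) d -> D (SComp (fill u (fill w z)) k) d.
Proof.
  intros Hk H.
  pose proof (proj1 (k_float_iff w k (ctx_comp (CL Hole k) u) z d Hk)) as Hw.
  rewrite !fill_ctx_comp in Hw; simpl in Hw.
  pose proof (proj1 (k_float_iff u k (CL Hole k) (fill w z) d Hk)) as Hu; simpl in Hu.
  apply k_contract; auto.
Qed.

Lemma derive_rho y : D y (Some (rho y)).
Proof. induction y; simpl; [apply d_id | apply d_mulR | apply d_one]; auto. Qed.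

Lemma tau_elim y dd : D (SComp y (SF (tau (y, dd)))) dd.
Proof.
  apply (d_bangL _ _ _ _ (CR y Hole)); auto; simpl.
  apply (d_ldivL _ _ _ _ y (rho y) (theta dd) Hole); auto.
  - apply derive_rho.
  - destruct dd; simpl; [apply d_id | apply d_zero]; auto.
Qed.

Lemma tauchain_elim s l y d : In s l ->
  D (SComp y (SF (tau s))) d -> D (SComp y (tauchain l)) d.
Proof.
  induction l as [|a [|b l'] IH]; intros Hin H; [destruct Hin| |].
  - now destruct Hin as [<- | []].
  - change (tauchain (a :: b :: l')) with (SComp (SF (tau a)) (tauchain (b :: l'))).
    destruct Hin as [-> | Hin].
    + apply (d_kw _ _ _ _ (CR y (CR (SF (tau s)) Hole))); auto using isK_tauchain.
      apply d_unit with (SComp y (SF (tau s))); auto.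
    + apply (d_kw _ _ _ _ (CR y (CL Hole (tauchain (b :: l'))))); simpl; auto.
      apply d_unit with (SComp y (tauchain (b :: l'))); auto.
Qed.
End KStructures.

Lemma hyps_to_tauchain cy R l y d :
  Deriv false cy R (fun s => In s l) y d ->
  Deriv true cy R (fun _ => False) (SComp y (tauchain l)) d.
Proof.
  pose proof (isK_tauchain l) as HK. set (K := tauchain l) in *.
  induction 1; try discriminate;
    try (apply k_weaken; auto; constructor; auto; fail).
  - apply d_unit with (SComp x K); auto. simpl. now rewrite H0.
  - apply tauchain_elim with (x, d); auto. apply tau_elim.
  - apply (k_absorb u Hole x HK); auto.
    exact (d_cut _ _ _ _ (SComp x K) a (CL u K) d IHDeriv1 IHDeriv2 (ok_true _ _)).
  - exact (d_oneL _ _ _ _ (CL u K) d IHDeriv (ok_true _ _)).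
  - apply d_zeroR; auto.
  - apply (k_absorb u (CL Hole (SF (LDiv a b))) x HK); auto.
    exact (d_ldivL _ _ _ _ (SComp x K) a b (CL u K) d IHDeriv1 IHDeriv2 (ok_true _ _)).
  - apply d_ldivR; auto. exact (d_ka2a _ _ _ _ Hole K (SF a) x _ eq_refl HK IHDeriv).
  - apply (k_absorb u (CR (SF (RDiv b a)) Hole) x HK); auto.
    exact (d_rdivL _ _ _ _ (SComp x K) a b (CL u K) d IHDeriv1 IHDeriv2 (ok_true _ _)).
  - apply d_rdivR; auto.
    apply (proj2 (k_float_iff _ _ _ (CL Hole (SF a)) K Hole x _ HK)). exact IHDeriv.
  - exact (d_mulL _ _ _ _ (CL u K) a b d IHDeriv (ok_true _ _)).
  - apply (k_absorb (CR x Hole) Hole y HK); auto.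
    apply (proj1 (k_float_iff _ _ _ (CL Hole (SComp y K)) K Hole x _ HK)).
    apply d_mulR; auto.
  - exact (d_andL1 _ _ _ _ (CL u K) a b d IHDeriv (ok_true _ _)).
  - exact (d_andL2 _ _ _ _ (CL u K) a b d IHDeriv (ok_true _ _)).
  - apply d_andR; auto.
  - exact (d_orL _ _ _ _ (CL u K) a b d IHDeriv1 IHDeriv2).
  - apply d_orR1; auto.
  - apply d_orR2; auto.
  - exact (d_e _ _ _ _ (CL u K) x y d H IHDeriv).
  - exact (d_c _ _ _ _ (CL u K) x d H IHDeriv).
  - exact (d_i _ _ _ _ (CL u K) x d H IHDeriv (ok_true _ _)).
  - apply d_o; auto.
Qed.

(* [rldiv a rzero] and [rrdiv rzero a] interpret ~a and -a. *)
Record resid_model (cy : bool) (R : srule -> Prop) := ResidModel {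
  carrier :> Type;
  rle : carrier -> carrier -> Prop;
  rmul : carrier -> carrier -> carrier;
  rldiv : carrier -> carrier -> carrier;
  rrdiv : carrier -> carrier -> carrier;
  rmeet : carrier -> carrier -> carrier;
  rjoin : carrier -> carrier -> carrier;
  rone : carrier;
  rzero : carrier;
  rle_refl : forall a, rle a a;
  rle_trans : forall a b c, rle a b -> rle b c -> rle a c;
  rmul_ldivP : forall a b c, rle (rmul a b) c <-> rle b (rldiv a c);
  rmul_rdivP : forall a b c, rle (rmul a b) c <-> rle a (rrdiv c b);
  rle_meetP : forall a b c, rle c (rmeet a b) <-> rle c a /\ rle c b;
  rjoin_leP : forall a b c, rle (rjoin a b) c <-> rle a c /\ rle b c;
  rmul1l_le : forall a, rle (rmul rone a) a;
  rle_mul1l : forall a, rle a (rmul rone a);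
  rmul1r_le : forall a, rle (rmul a rone) a;
  rle_mul1r : forall a, rle a (rmul a rone);
  rneg_lr : forall a, rle (rldiv (rrdiv rzero a) rzero) a;
  rneg_rl : forall a, rle (rrdiv rzero (rldiv a rzero)) a;
  rneg_contra_lr : forall a b,
    rle (rrdiv (rldiv a rzero) b) (rldiv a (rrdiv rzero b));
  rneg_contra_rl : forall a b,
    rle (rldiv a (rrdiv rzero b)) (rrdiv (rldiv a rzero) b);
  rneg_cyc_lr : cy = true -> forall a, rle (rldiv a rzero) (rrdiv rzero a);
  rneg_cyc_rl : cy = true -> forall a, rle (rrdiv rzero a) (rldiv a rzero);
  rmulC_le : R Re -> forall a b, rle (rmul a b) (rmul b a);
  rle_mulxx : R Rc -> forall a, rle a (rmul a a);
  rle_one : R Rw -> forall a, rle a rone;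
  rzero_le : R Rw -> forall a, rle rzero a
}.

Record bang_model (cy : bool) (R : srule -> Prop) := BangModel {
  resid :> resid_model cy R;
  rbot : resid;
  rbot_le : forall a, rle resid rbot a;
  rmul_botl : forall a, rle resid (rmul resid rbot a) rbot;
  rmul_botr : forall a, rle resid (rmul resid a rbot) rbot
}.

Section ResidTheory.
Variables (cy : bool) (R : srule -> Prop) (A : resid_model cy R).
Local Infix "≤" := (rle A) (at level 70).
Local Infix "·" := (rmul A) (at level 40, left associativity).

Lemma rmul_monol a a' b : a ≤ a' -> a · b ≤ a' · b.
Proof.
  intro H. apply rmul_rdivP, rle_trans with a'; auto.
  apply rmul_rdivP, rle_refl.
Qed.

Lemma rmul_monor a b b' : b ≤ b' -> a · b ≤ a · b'.
Proof.
  intro H. apply rmul_ldivP, rle_trans with b'; auto.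
  apply rmul_ldivP, rle_refl.
Qed.

Lemma rmul_mono a a' b b' : a ≤ a' -> b ≤ b' -> a · b ≤ a' · b'.
Proof.
  intros. apply rle_trans with (a' · b); [apply rmul_monol | apply rmul_monor]; auto.
Qed.

Lemma rmul_ldiv_le a b : a · rldiv A a b ≤ b.
Proof. apply rmul_ldivP, rle_refl. Qed.

Lemma rmul_rdiv_le a b : rrdiv A b a · a ≤ b.
Proof. apply rmul_rdivP, rle_refl. Qed.

Lemma rmeet_le_l a b : rmeet A a b ≤ a.
Proof. apply (rle_meetP A a b), rle_refl. Qed.

Lemma rmeet_le_r a b : rmeet A a b ≤ b.
Proof. apply (rle_meetP A a b), rle_refl. Qed.

Lemma rle_join_l a b : a ≤ rjoin A a b.
Proof. apply (rjoin_leP A a b), rle_refl. Qed.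

Lemma rle_join_r a b : b ≤ rjoin A a b.
Proof. apply (rjoin_leP A a b), rle_refl. Qed.
End ResidTheory.

Section Soundness.
Variables (cy : bool) (R : srule -> Prop) (M : bang_model cy R) (v : nat -> M).
Local Infix "≤" := (rle M) (at level 70).
Local Infix "·" := (rmul M) (at level 40, left associativity).
Local Notation "1" := (rone M).
Local Notation bot := (rbot M).

Definition rbang (m : M) : M :=
  if excluded_middle_informative (1 ≤ m) then 1 else bot.

Fixpoint interp (a : form) : M :=
  match a with
  | Var n => v n
  | And a b => rmeet M (interp a) (interp b)
  | Or a b => rjoin M (interp a) (interp b)
  | Mul a b => interp a · interp b
  | LDiv a b => rldiv M (interp a) (interp b)
  | RDiv a b => rrdiv M (interp a) (interp b)
  | Bang a => rbang (interp a)
  | One => 1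
  | Zero => rzero M
  end.

Fixpoint interp_ctx (u : Ctx) (m : M) : M :=
  match u with
  | Hole => m
  | CL u y => interp_ctx u m · interp (rho y)
  | CR x u => interp (rho x) · interp_ctx u m
  end.

Lemma interp_fill u z : interp (rho (fill u z)) = interp_ctx u (interp (rho z)).
Proof. induction u; simpl; congruence. Qed.

Lemma interp_ctx_mono u m m' : m ≤ m' -> interp_ctx u m ≤ interp_ctx u m'.
Proof.
  induction u; simpl; intros; auto; [apply rmul_monol | apply rmul_monor]; auto.
Qed.

Lemma interp_ctx_join_le u : forall a b c,
  interp_ctx u a ≤ c -> interp_ctx u b ≤ c -> interp_ctx u (rjoin M a b) ≤ c.
Proof.
  induction u; simpl; intros a b c Ha Hb.
  - now apply rjoin_leP.
  - apply rmul_rdivP, IHu; apply rmul_rdivP; auto.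
  - apply rmul_ldivP, IHu; apply rmul_ldivP; auto.
Qed.

Lemma interp_comp x y :
  interp (rho (comp x y)) ≤ interp (rho x) · interp (rho y) /\
  interp (rho x) · interp (rho y) ≤ interp (rho (comp x y)).
Proof.
  destruct x, y; simpl;
    auto using rle_refl, rmul1l_le, rle_mul1l, rmul1r_le, rle_mul1r.
Qed.

Lemma interp_norm x :
  interp (rho (norm x)) ≤ interp (rho x) /\ interp (rho x) ≤ interp (rho (norm x)).
Proof.
  induction x as [a|x1 [IH1 IH1'] x2 [IH2 IH2']|]; simpl; auto using rle_refl.
  destruct (interp_comp (norm x1) (norm x2)) as [Hc Hc'].
  split; eapply rle_trans; eauto using rmul_mono.
Qed.

Definition unit_or_bot (m : M) : Prop := (m ≤ 1 /\ 1 ≤ m) \/ m ≤ bot.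

Lemma rbang_unit_or_bot m : unit_or_bot (rbang m).
Proof.
  unfold rbang; destruct excluded_middle_informative;
    [left; split | right]; apply rle_refl.
Qed.

Lemma rbang_le m : rbang m ≤ m.
Proof. unfold rbang; destruct excluded_middle_informative; auto using rbot_le. Qed.

Lemma le_rbang k m : unit_or_bot k -> k ≤ m -> k ≤ rbang m.
Proof.
  unfold rbang; intros [[Hk1 H1k] | Hk] Hm; destruct excluded_middle_informative;
    eauto using rle_trans, rbot_le.
  exfalso; eauto using rle_trans.
Qed.

Lemma isK_unit_or_bot k : isK k -> unit_or_bot (interp (rho k)).
Proof.
  induction k as [[]|k1 IH1 k2 IH2|]; simpl; try tauto.
  - intros; apply rbang_unit_or_bot.
  - intros [[[H1 H1'] | H1]%IH1 [[H2 H2'] | H2]%IH2].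
    + left; split.
      * apply rle_trans with (1 · 1); auto using rmul_mono, rmul1l_le.
      * apply rle_trans with (1 · 1); auto using rmul_mono, rle_mul1l.
    + right; eapply rle_trans; eauto using rmul_monor, rmul_botr.
    + right; eapply rle_trans; eauto using rmul_monol, rmul_botl.
    + right; eapply rle_trans; eauto using rmul_monol, rmul_botl.
  - left; split; apply rle_refl.
Qed.

Lemma unit_or_bot_le (P Q : M -> M) m :
  (forall a b, a ≤ b -> P a ≤ P b) -> (forall a b, a ≤ b -> Q a ≤ Q b) ->
  P 1 ≤ Q 1 -> P bot ≤ bot -> unit_or_bot m -> P m ≤ Q m.
Proof.
  intros HP HQ H1 Hbot [[Hm1 H1m] | Hm].
  - eauto using rle_trans.
  - eauto using rle_trans, rbot_le.
Qed.

Ltac mul_mono := intros ? ? ?; repeat first [assumption | apply rle_refl | apply rmul_mono].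

Lemma unit_or_bot_le_one m : unit_or_bot m -> m ≤ 1.
Proof. apply (unit_or_bot_le id (fun _ => 1)); auto using rle_refl. Qed.

Lemma unit_or_bot_le_sq m : unit_or_bot m -> m ≤ m · m.
Proof.
  apply (unit_or_bot_le id (fun m => m · m)); try mul_mono;
    auto using rle_mul1l, rle_refl.
Qed.

Lemma unit_or_bot_mulC_l m y : unit_or_bot m -> m · y ≤ y · m.
Proof.
  apply (unit_or_bot_le (fun m => m · y) (fun m => y · m)); auto using rmul_botl;
    try mul_mono.
  eauto using rle_trans, rmul1l_le, rle_mul1r.
Qed.

Lemma unit_or_bot_mulC_r m y : unit_or_bot m -> y · m ≤ m · y.
Proof.
  apply (unit_or_bot_le (fun m => y · m) (fun m => m · y)); auto using rmul_botr;
    try mul_mono.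
  eauto using rle_trans, rmul1r_le, rle_mul1l.
Qed.

Lemma unit_or_bot_mulA_l m y z : unit_or_bot m -> (m · y) · z ≤ m · (y · z).
Proof.
  apply (unit_or_bot_le (fun m => (m · y) · z) (fun m => m · (y · z)));
    try mul_mono; eauto using rle_trans, rmul_monol, rmul_botl, rmul1l_le, rle_mul1l.
Qed.

Lemma unit_or_bot_mulA_l' m y z : unit_or_bot m -> m · (y · z) ≤ (m · y) · z.
Proof.
  apply (unit_or_bot_le (fun m => m · (y · z)) (fun m => (m · y) · z));
    try mul_mono; eauto using rle_trans, rmul_monol, rmul_botl, rmul1l_le, rle_mul1l.
Qed.

Lemma unit_or_bot_mulA_r m x y : unit_or_bot m -> (x · y) · m ≤ x · (y · m).
Proof.
  apply (unit_or_bot_le (fun m => (x · y) · m) (fun m => x · (y · m)));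
    try mul_mono; eauto using rle_trans, rmul_monor, rmul_botr, rmul1r_le, rle_mul1r.
Qed.

Lemma unit_or_bot_mulA_r' m x y : unit_or_bot m -> x · (y · m) ≤ (x · y) · m.
Proof.
  apply (unit_or_bot_le (fun m => x · (y · m)) (fun m => (x · y) · m));
    try mul_mono; eauto using rle_trans, rmul_monor, rmul_botr, rmul1r_le, rle_mul1r.
Qed.

Ltac ctx_step := eapply rle_trans; [apply interp_ctx_mono | eassumption].

Lemma interp_sound x d :
  Deriv true cy R (fun _ => False) x d -> interp (rho x) ≤ interp (theta d).
Proof.
  induction 1; simpl in *; rewrite ?interp_fill in *; simpl in *; try contradiction;
    repeat match goal with H : isK _ |- _ => apply isK_unit_or_bot in H end;
    try solve
      [ auto using rle_refl, rneg_lr, rneg_rl, rneg_contra_lr, rneg_contra_rl,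
          rneg_cyc_lr, rneg_cyc_rl, rmul_mono, rle_join_l, rle_join_r,
          interp_ctx_join_le, rzero_le
      | ctx_step; eauto using rmeet_le_l, rmeet_le_r, rbang_le, rmulC_le, rle_mulxx,
          rle_one, unit_or_bot_le_one, unit_or_bot_le_sq, unit_or_bot_mulC_l,
          unit_or_bot_mulC_r, unit_or_bot_mulA_l, unit_or_bot_mulA_l',
          unit_or_bot_mulA_r, unit_or_bot_mulA_r' ].
  - destruct (interp_norm x) as [Hx _], (interp_norm y) as [_ Hy]; rewrite H0 in Hx.
    eauto using rle_trans.
  - ctx_step. apply rle_trans with (interp a · rldiv M (interp a) (interp b));
      auto using rmul_monol, rmul_ldiv_le.
  - now apply rmul_ldivP.
  - ctx_step. apply rle_trans with (rrdiv M (interp b) (interp a) · interp a);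
      auto using rmul_monor, rmul_rdiv_le.
  - now apply rmul_rdivP.
  - now apply rle_meetP.
  - eauto using rle_trans, rle_join_l.
  - eauto using rle_trans, rle_join_r.
  - now apply le_rbang.
  - eauto using rle_trans, rzero_le.
Qed.

Lemma rbang_unit m : 1 ≤ m -> rbang m = 1.
Proof. unfold rbang; now destruct excluded_middle_informative. Qed.

Lemma one_le_interp_tauchain l :
  (forall s, In s l -> 1 ≤ interp (LDiv (rho (fst s)) (theta (snd s)))) ->
  1 ≤ interp (rho (tauchain l)).
Proof.
  induction l as [|s [|s' l] IH]; intros Hl; simpl; [apply rle_refl | |];
    rewrite rbang_unit by (apply (Hl s), in_eq).
  - apply rle_refl.
  - apply rle_trans with (1 · 1); auto using rle_mul1l.
    apply rmul_monor, IH. intros; apply Hl; auto using in_cons.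
Qed.

Lemma interp_sound_tauchain l x d :
  (forall s, In s l -> 1 ≤ interp (LDiv (rho (fst s)) (theta (snd s)))) ->
  Deriv true cy R (fun _ => False) (SComp x (tauchain l)) d ->
  interp (rho x) ≤ interp (theta d).
Proof.
  intros Hl H%interp_sound; simpl in H.
  apply rle_trans with (interp (rho x) · 1); auto using rle_mul1r.
  eauto using rle_trans, rmul_monor, one_le_interp_tauchain.
Qed.
End Soundness.

Section Lindenbaum.
Variables (cy : bool) (R : srule -> Prop) (S : sequent -> Prop).
Local Notation D := (Deriv false cy R S).
Local Notation "a ⊢ b" := (D (SF a) (Some b)) (at level 70).

Definition lform := {a : form | bangfree a}.
Definition lle (p q : lform) : Prop := proj1_sig p ⊢ proj1_sig q.

Definition lift2 (op : form -> form -> form)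
  (Hop : forall a b, bangfree a -> bangfree b -> bangfree (op a b)) (p q : lform) : lform :=
  exist _ (op (proj1_sig p) (proj1_sig q)) (Hop _ _ (proj2_sig p) (proj2_sig q)).

Definition lmul := lift2 Mul (fun _ _ => @conj _ _).
Definition lldiv := lift2 LDiv (fun _ _ => @conj _ _).
Definition lrdiv := lift2 RDiv (fun _ _ => @conj _ _).
Definition lmeet := lift2 And (fun _ _ => @conj _ _).
Definition ljoin := lift2 Or (fun _ _ => @conj _ _).
Definition lone : lform := exist _ One I.
Definition lzero : lform := exist _ Zero I.

Ltac lform_cases := repeat match goal with p : lform |- _ => destruct p end;
  unfold lle, lmul, lldiv, lrdiv, lmeet, ljoin, lone, lzero, lift2 in *; simpl in *.

Lemma lle_refl p : lle p p.
Proof. lform_cases. apply d_id; solve_ok. Qed.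

Lemma lle_trans p q r : lle p q -> lle q r -> lle p r.
Proof.
  destruct p as [a Ha], q as [b Hb], r as [c Hc]; unfold lle; simpl; intros.
  apply (d_cut _ _ _ _ (SF a) b Hole); auto; solve_ok.
Qed.

Lemma lmul_ldivP p q r : lle (lmul p q) r <-> lle q (lldiv p r).
Proof.
  destruct p as [a Ha], q as [b Hb], r as [c Hc]; unfold lle; simpl; split; intro H.
  - apply d_ldivR; [|solve_ok].
    apply (d_cut _ _ _ _ (SComp (SF a) (SF b)) (Mul a b) Hole); auto; [|solve_ok].
    apply d_mulR; apply d_id; solve_ok.
  - apply (d_mulL _ _ _ _ Hole); [|solve_ok]; simpl.
    apply (d_cut _ _ _ _ (SF b) (LDiv a c) (CR (SF a) Hole)); auto; [|solve_ok]; simpl.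
    apply (d_ldivL _ _ _ _ (SF a) a c Hole); [apply d_id | apply d_id | ]; solve_ok.
Qed.

Lemma lmul_rdivP p q r : lle (lmul p q) r <-> lle p (lrdiv r q).
Proof.
  destruct p as [a Ha], q as [b Hb], r as [c Hc]; unfold lle; simpl; split; intro H.
  - apply d_rdivR; [|solve_ok].
    apply (d_cut _ _ _ _ (SComp (SF a) (SF b)) (Mul a b) Hole); auto; [|solve_ok].
    apply d_mulR; apply d_id; solve_ok.
  - apply (d_mulL _ _ _ _ Hole); [|solve_ok]; simpl.
    apply (d_cut _ _ _ _ (SF a) (RDiv c b) (CL Hole (SF b))); auto; [|solve_ok]; simpl.
    apply (d_rdivL _ _ _ _ (SF b) b c Hole); [apply d_id | apply d_id | ]; solve_ok.
Qed.

Lemma lle_meetP p q r : lle r (lmeet p q) <-> lle r p /\ lle r q.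
Proof.
  split; [|intros []; lform_cases; now apply d_andR].
  intro H; split; eapply lle_trans; eauto; lform_cases;
    [apply (d_andL1 _ _ _ _ Hole) | apply (d_andL2 _ _ _ _ Hole)]; simpl;
    solve [apply d_id; solve_ok | solve_ok].
Qed.

Lemma ljoin_leP p q r : lle (ljoin p q) r <-> lle p r /\ lle q r.
Proof.
  split; [|intros []; lform_cases; now apply (d_orL _ _ _ _ Hole)].
  intro H; split; (eapply lle_trans; [|eauto]); lform_cases;
    [apply d_orR1 | apply d_orR2]; solve [apply d_id; solve_ok | solve_ok].
Qed.

Lemma lmul1l_le p : lle (lmul lone p) p.
Proof.
  destruct p as [a Ha]; lform_cases. apply (d_mulL _ _ _ _ Hole); [|solve_ok]; simpl.
  apply (d_oneL _ _ _ _ (CL Hole (SF a))); [|solve_ok]; simpl.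
  apply d_unit with (SF a); [apply d_id | reflexivity |]; solve_ok.
Qed.

Lemma lle_mul1l p : lle p (lmul lone p).
Proof.
  destruct p as [a Ha]; lform_cases.
  apply d_unit with (SComp SEmpty (SF a)); [|reflexivity | solve_ok].
  apply d_mulR; [apply d_one | apply d_id; solve_ok].
Qed.

Lemma lmul1r_le p : lle (lmul p lone) p.
Proof.
  destruct p as [a Ha]; lform_cases. apply (d_mulL _ _ _ _ Hole); [|solve_ok]; simpl.
  apply (d_oneL _ _ _ _ (CR (SF a) Hole)); [|solve_ok]; simpl.
  apply d_unit with (SF a); [apply d_id | reflexivity |]; solve_ok.
Qed.

Lemma lle_mul1r p : lle p (lmul p lone).
Proof.
  destruct p as [a Ha]; lform_cases.
  apply d_unit with (SComp (SF a) SEmpty); [|reflexivity | solve_ok].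
  apply d_mulR; [apply d_id; solve_ok | apply d_one].
Qed.

Lemma lneg_lr p : lle (lldiv (lrdiv lzero p) lzero) p.
Proof. lform_cases. apply d_ax1; solve_ok. Qed.

Lemma lneg_rl p : lle (lrdiv lzero (lldiv p lzero)) p.
Proof. lform_cases. apply d_ax2; solve_ok. Qed.

Lemma lneg_contra_lr p q : lle (lrdiv (lldiv p lzero) q) (lldiv p (lrdiv lzero q)).
Proof. lform_cases. apply d_ax3; solve_ok. Qed.

Lemma lneg_contra_rl p q : lle (lldiv p (lrdiv lzero q)) (lrdiv (lldiv p lzero) q).
Proof. lform_cases. apply d_ax4; solve_ok. Qed.

Lemma lneg_cyc_lr : cy = true -> forall p, lle (lldiv p lzero) (lrdiv lzero p).
Proof. intros Hcy p. lform_cases. apply d_cyc1; auto; solve_ok. Qed.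

Lemma lneg_cyc_rl : cy = true -> forall p, lle (lrdiv lzero p) (lldiv p lzero).
Proof. intros Hcy p. lform_cases. apply d_cyc2; auto; solve_ok. Qed.

Lemma lmulC_le : R Re -> forall p q, lle (lmul p q) (lmul q p).
Proof.
  intros He [a Ha] [b Hb]. lform_cases.
  apply (d_mulL _ _ _ _ Hole); [|solve_ok]; simpl.
  apply (d_e _ _ _ _ Hole (SF b) (SF a)); auto; simpl.
  apply d_mulR; apply d_id; solve_ok.
Qed.

Lemma lle_mulxx : R Rc -> forall p, lle p (lmul p p).
Proof.
  intros Hc [a Ha]. lform_cases.
  apply (d_c _ _ _ _ Hole (SF a)); auto; simpl.
  apply d_mulR; apply d_id; solve_ok.
Qed.

Lemma lle_one : R Rw -> forall p, lle p lone.
Proof.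
  intros Hw [a Ha]. lform_cases.
  apply (d_i _ _ _ _ Hole (SF a)); auto; [apply d_one | solve_ok].
Qed.

Lemma lzero_le : R Rw -> forall p, lle lzero p.
Proof. intros Hw [a Ha]. lform_cases. apply d_o; auto; [apply d_zero | solve_ok]. Qed.

Definition lindenbaum : resid_model cy R :=
  {| rle := lle; rmul := lmul; rldiv := lldiv; rrdiv := lrdiv;
     rmeet := lmeet; rjoin := ljoin; rone := lone; rzero := lzero;
     rle_refl := lle_refl; rle_trans := lle_trans;
     rmul_ldivP := lmul_ldivP; rmul_rdivP := lmul_rdivP;
     rle_meetP := lle_meetP; rjoin_leP := ljoin_leP;
     rmul1l_le := lmul1l_le; rle_mul1l := lle_mul1l;
     rmul1r_le := lmul1r_le; rle_mul1r := lle_mul1r;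
     rneg_lr := lneg_lr; rneg_rl := lneg_rl;
     rneg_contra_lr := lneg_contra_lr; rneg_contra_rl := lneg_contra_rl;
     rneg_cyc_lr := lneg_cyc_lr; rneg_cyc_rl := lneg_cyc_rl;
     rmulC_le := lmulC_le; rle_mulxx := lle_mulxx;
     rle_one := lle_one; rzero_le := lzero_le |}.

Lemma lmul_zerol_le : R Rw -> forall p, lle (lmul lzero p) lzero.
Proof.
  intros Hw [a Ha]. lform_cases. apply (d_mulL _ _ _ _ Hole); [|solve_ok]; simpl.
  apply d_zeroR, (d_i _ _ _ _ (CR (SF Zero) Hole) (SF a)); auto; [|solve_ok]; simpl.
  apply d_unit with (SF Zero); [apply d_zero | reflexivity | solve_ok].
Qed.

Lemma lmul_zeror_le : R Rw -> forall p, lle (lmul p lzero) lzero.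
Proof.
  intros Hw [a Ha]. lform_cases. apply (d_mulL _ _ _ _ Hole); [|solve_ok]; simpl.
  apply d_zeroR, (d_i _ _ _ _ (CL Hole (SF Zero)) (SF a)); auto; [|solve_ok]; simpl.
  apply d_unit with (SF Zero); [apply d_zero | reflexivity | solve_ok].
Qed.

Definition lindenbaum_bang (Hw : R Rw) : bang_model cy R :=
  {| resid := lindenbaum; rbot := lzero; rbot_le := lzero_le Hw;
     rmul_botl := lmul_zerol_le Hw; rmul_botr := lmul_zeror_le Hw |}.

Lemma derive_rho_free y : bangfree_str y -> D y (Some (rho y)).
Proof.
  induction y; simpl; intros.
  - apply d_id; solve_ok.
  - apply d_mulR; tauto.
  - apply d_one.
Qed.

Lemma derive_fold_rho y : forall u d,
  bangfree_str y -> bangfree_ctx u -> bangfree_stoup d ->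
  D (fill u y) d -> D (fill u (SF (rho y))) d.
Proof.
  induction y as [a|y1 IH1 y2 IH2|]; intros u d Hy Hu Hd H; simpl in *; auto.
  - destruct Hy as [Hy1 Hy2].
    apply (d_mulL _ _ _ _ u); [|solve_ok].
    specialize (IH2 (ctx_comp u (CR (SF (rho y1)) Hole)) d Hy2).
    specialize (IH1 (ctx_comp u (CL Hole y2)) d Hy1).
    rewrite !fill_ctx_comp in IH1, IH2; simpl in IH1, IH2.
    apply IH2, IH1; auto;
      clear -Hu Hy1 Hy2; induction u; simpl in *; intuition auto using bangfree_rho.
  - apply (d_oneL _ _ _ _ u); auto; solve_ok.
Qed.

Lemma one_derives_hyp y dd : S (y, dd) -> bangfree_str y -> bangfree_stoup dd ->
  One ⊢ LDiv (rho y) (theta dd).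
Proof.
  intros Hs Hy Hd.
  apply d_ldivR; [|solve_ok].
  apply (d_oneL _ _ _ _ (CR (SF (rho y)) Hole)); [|solve_ok]; simpl.
  apply d_unit with (SF (rho y)); [|reflexivity | solve_ok].
  apply (derive_fold_rho y Hole); simpl; auto using bangfree_theta.
  destruct dd; [|apply d_zeroR]; apply d_hyp; auto; solve_ok.
Qed.

Lemma derive_of_rho_theta x d : bangfree_str x -> bangfree_stoup d ->
  rho x ⊢ theta d -> D x d.
Proof.
  intros Hx Hd H.
  assert (Hxd : D x (Some (theta d))).
  { apply (d_cut _ _ _ _ x (rho x) Hole); auto using derive_rho_free; solve_ok. }
  destruct d; simpl in *; auto.
  apply (d_cut _ _ _ _ x Zero Hole); auto using d_zero; solve_ok.
Qed.
End Lindenbaum.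

Inductive bounded (T : Type) : Type := Bot | Top | El (t : T).
Arguments Bot {T}.
Arguments Top {T}.
Arguments El {T} t.

Section Bounds.
Variables (cy : bool) (R : srule -> Prop) (A : resid_model cy R).
Local Infix "≤" := (rle A) (at level 70).

Definition ble (p q : bounded A) : Prop :=
  match p, q with
  | Bot, _ | _, Top => True
  | El a, El b => a ≤ b
  | _, _ => False
  end.

Definition bmul (p q : bounded A) : bounded A :=
  match p, q with
  | Bot, _ | _, Bot => Bot
  | Top, _ | _, Top => Top
  | El a, El b => El (rmul A a b)
  end.

Definition bldiv (p r : bounded A) : bounded A :=
  match p, r with
  | Bot, _ | _, Top => Top
  | Top, _ | El _, Bot => Bot
  | El a, El c => El (rldiv A a c)
  end.

Definition brdiv (r p : bounded A) : bounded A :=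
  match p, r with
  | Bot, _ | _, Top => Top
  | Top, _ | El _, Bot => Bot
  | El a, El c => El (rrdiv A c a)
  end.

Definition bmeet (p q : bounded A) : bounded A :=
  match p, q with
  | Bot, _ | _, Bot => Bot
  | Top, r | r, Top => r
  | El a, El b => El (rmeet A a b)
  end.

Definition bjoin (p q : bounded A) : bounded A :=
  match p, q with
  | Top, _ | _, Top => Top
  | Bot, r | r, Bot => r
  | El a, El b => El (rjoin A a b)
  end.

Definition bone : bounded A := El (rone A).
Definition bzero : bounded A := El (rzero A).

Ltac bounded_cases := repeat match goal with p : bounded _ |- _ => destruct p end;
  unfold bone, bzero; simpl in *.

Lemma ble_refl p : ble p p.
Proof. bounded_cases; auto using rle_refl. Qed.

Lemma ble_trans p q r : ble p q -> ble q r -> ble p r.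
Proof. bounded_cases; try tauto; eauto using rle_trans. Qed.

Lemma bmul_ldivP p q r : ble (bmul p q) r <-> ble q (bldiv p r).
Proof. bounded_cases; try tauto; apply rmul_ldivP. Qed.

Lemma bmul_rdivP p q r : ble (bmul p q) r <-> ble p (brdiv r q).
Proof. bounded_cases; try tauto; apply rmul_rdivP. Qed.

Lemma ble_meetP p q r : ble r (bmeet p q) <-> ble r p /\ ble r q.
Proof. bounded_cases; try tauto; apply rle_meetP. Qed.

Lemma bjoin_leP p q r : ble (bjoin p q) r <-> ble p r /\ ble q r.
Proof. bounded_cases; try tauto; apply rjoin_leP. Qed.

Lemma bmul1l_le p : ble (bmul bone p) p.
Proof. bounded_cases; auto using rmul1l_le. Qed.

Lemma ble_mul1l p : ble p (bmul bone p).
Proof. bounded_cases; auto using rle_mul1l. Qed.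

Lemma bmul1r_le p : ble (bmul p bone) p.
Proof. bounded_cases; auto using rmul1r_le. Qed.

Lemma ble_mul1r p : ble p (bmul p bone).
Proof. bounded_cases; auto using rle_mul1r. Qed.

Lemma bneg_lr p : ble (bldiv (brdiv bzero p) bzero) p.
Proof. bounded_cases; auto using rneg_lr. Qed.

Lemma bneg_rl p : ble (brdiv bzero (bldiv p bzero)) p.
Proof. bounded_cases; auto using rneg_rl. Qed.

Lemma bneg_contra_lr p q : ble (brdiv (bldiv p bzero) q) (bldiv p (brdiv bzero q)).
Proof. bounded_cases; auto using rneg_contra_lr. Qed.

Lemma bneg_contra_rl p q : ble (bldiv p (brdiv bzero q)) (brdiv (bldiv p bzero) q).
Proof. bounded_cases; auto using rneg_contra_rl. Qed.

Lemma bneg_cyc_lr : cy = true -> forall p, ble (bldiv p bzero) (brdiv bzero p).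
Proof. intros Hcy p; bounded_cases; auto using rneg_cyc_lr. Qed.

Lemma bneg_cyc_rl : cy = true -> forall p, ble (brdiv bzero p) (bldiv p bzero).
Proof. intros Hcy p; bounded_cases; auto using rneg_cyc_rl. Qed.

Lemma bmulC_le : R Re -> forall p q, ble (bmul p q) (bmul q p).
Proof. intros He p q; bounded_cases; auto using rmulC_le. Qed.

Lemma ble_mulxx : R Rc -> forall p, ble p (bmul p p).
Proof. intros Hc p; bounded_cases; auto using rle_mulxx. Qed.

(* Rules (i) and (o) fail for the adjoined top and bottom. *)
Hypothesis no_weakening : ~ R Rw.

Definition bounded_resid : resid_model cy R :=
  {| rle := ble; rmul := bmul; rldiv := bldiv; rrdiv := brdiv;
     rmeet := bmeet; rjoin := bjoin; rone := bone; rzero := bzero;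
     rle_refl := ble_refl; rle_trans := ble_trans;
     rmul_ldivP := bmul_ldivP; rmul_rdivP := bmul_rdivP;
     rle_meetP := ble_meetP; rjoin_leP := bjoin_leP;
     rmul1l_le := bmul1l_le; rle_mul1l := ble_mul1l;
     rmul1r_le := bmul1r_le; rle_mul1r := ble_mul1r;
     rneg_lr := bneg_lr; rneg_rl := bneg_rl;
     rneg_contra_lr := bneg_contra_lr; rneg_contra_rl := bneg_contra_rl;
     rneg_cyc_lr := bneg_cyc_lr; rneg_cyc_rl := bneg_cyc_rl;
     rmulC_le := bmulC_le; rle_mulxx := ble_mulxx;
     rle_one := fun Hw => False_ind _ (no_weakening Hw);
     rzero_le := fun Hw => False_ind _ (no_weakening Hw) |}.

Lemma bmul_botr p : ble (bmul p Bot) Bot.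
Proof. now destruct p. Qed.

Definition bounded_bang : bang_model cy R :=
  {| resid := bounded_resid; rbot := Bot;
     rbot_le := fun _ => I; rmul_botl := fun _ => I; rmul_botr := bmul_botr |}.
End Bounds.

Section Reflection.
Variables (cy : bool) (R : srule -> Prop) (S : sequent -> Prop).
Variables (M : bang_model cy R) (v : nat -> M) (e : lform -> M).
Local Notation D := (Deriv false cy R S).
Local Notation "a ≤ b" := (rle M a b) (at level 70).

Hypothesis e_le : forall p q, e p ≤ e q <-> lle cy R S p q.
Hypothesis interp_e :
  forall a, bangfree a -> exists p, interp M v a = e p /\ proj1_sig p = a.

Lemma derive_of_interp_le x d : bangfree_str x -> bangfree_stoup d ->
  interp M v (rho x) ≤ interp M v (theta d) -> D x d.
Proof.
  intros Hx Hd Hle.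
  destruct (interp_e _ (bangfree_rho _ Hx)) as [p [Hp Hpx]].
  destruct (interp_e _ (bangfree_theta _ Hd)) as [q [Hq Hqd]].
  apply derive_of_rho_theta; auto. rewrite <- Hpx, <- Hqd. apply e_le. congruence.
Qed.

Lemma one_le_interp_hyp y dd : S (y, dd) -> bangfree_seq (y, dd) ->
  rone M ≤ interp M v (LDiv (rho y) (theta dd)).
Proof.
  intros Hs [Hy Hd].
  assert (Hyd : bangfree (LDiv (rho y) (theta dd)))
    by (split; auto using bangfree_rho, bangfree_theta).
  destruct (interp_e _ Hyd) as [q [-> Hq]].
  destruct (interp_e One I) as [p [Hp Hp1]]; simpl in Hp. rewrite Hp.
  apply e_le; unfold lle; rewrite Hp1, Hq. now apply one_derives_hyp.
Qed.

Lemma derive_of_tauchain l x d :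
  (forall s, In s l -> S s /\ bangfree_seq s) -> bangfree_seq (x, d) ->
  Deriv true cy R (fun _ => False) (SComp x (tauchain l)) d -> D x d.
Proof.
  intros Hl [Hx Hd] H. apply derive_of_interp_le; auto.
  apply (interp_sound_tauchain M v l); auto.
  intros [y dd] [Hs Hyd]%Hl. now apply one_le_interp_hyp.
Qed.
End Reflection.

Definition lvar (n : nat) : lform := exist _ (Var n) I.

Lemma interp_lindenbaum cy R S (Hw : R Rw) a : bangfree a ->
  proj1_sig (interp (lindenbaum_bang cy R S Hw) lvar a) = a.
Proof. induction a; simpl; intuition congruence. Qed.

Lemma interp_bounded cy R S (HnW : ~ R Rw) a : bangfree a ->
  exists p, interp (bounded_bang (lindenbaum cy R S) HnW) (fun n => El (lvar n)) a = El p /\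
  proj1_sig p = a.
Proof.
  induction a; simpl; try tauto; try (now eexists; split);
    intros [(p & -> & <-)%IHa1 (q & -> & <-)%IHa2]; now eexists.
Qed.

Lemma tauchain_to_hyps cy R l x d :
  (forall s, In s l -> bangfree_seq s) -> bangfree_seq (x, d) ->
  Deriv true cy R (fun _ => False) (SComp x (tauchain l)) d ->
  Deriv false cy R (fun s => In s l) x d.
Proof.
  intros Hl. set (S := fun s => In s l).
  assert (Hl' : forall s, In s l -> S s /\ bangfree_seq s) by auto.
  destruct (classic (R Rw)) as [Hw | HnW].
  - apply (derive_of_tauchain (lindenbaum_bang cy R S Hw) lvar id); auto;
      [intros; reflexivity|].
    intros a Ha; exists (interp (lindenbaum_bang cy R S Hw) lvar a).
    auto using interp_lindenbaum.
  - apply (derive_of_tauchain (bounded_bang (lindenbaum cy R S) HnW)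
      (fun n => El (lvar n)) El); auto;
      [intros; reflexivity | intros; now apply interp_bounded].
Qed.

Theorem mainTheorem19 (R : srule -> Prop) (l : list sequent) (x : Str) (d : stoup) :
  l <> nil ->
  (forall s, In s l -> bangfree_seq s) ->
  bangfree_seq (x, d) ->
  (InFNL_der R (fun s => In s l) x d <-> NACCLLm_prov R (SComp x (tauchain l)) d) /\
  (CyInFNL_der R (fun s => In s l) x d <-> NACCLL_prov R (SComp x (tauchain l)) d).
Proof.
  intros _ Hl Hxd.
  split; split; intro H;
    first [now apply hyps_to_tauchain | now apply tauchain_to_hyps].
Qed.
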